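(* Under Strategy 2A (described in the context), the expected number of uncles created during an attack cycle that are eventually referred is $\mathbb{E}[U]=q-q^{n_1+1}$.
   Context: Honest hashrate $p$, attacker hashrate $q$, $p+q=1$, $0<q<p$; $\gamma\in[0,1]$ is the fraction of honest hashrate mining on the attacker's block during a public competition between equal-height blocks. Attack cycles are i.i.d. words in S (attacker block) and H (honest block): H, SHS, SHH, or SSwH with $w$ a Dyck word; $\mathbb{P}[H]=p$, $\mathbb{P}[SHS]=pq^2$, $\mathbb{P}[SHH]=p^2q$, $\mathbb{P}[SSwH]=q^2p(pq)^{|w|}$ ($|w|$ half the length of $w$). Ethereum rules: an uncle is a non-official block whose parent is official; a nephew (official block) may refer an uncle at distance (height difference) at most $n_1$ ($n_1\ge2$ an integer). Strategy 2A (''brutal fork''): the attacker keeps his whole fork secret and releases it all at once at the end of the attack cycle, when an honest block would reduce his advance to one block (after a single attacker block, he publishes it to compete with the honest block); the attacker's fork wins in cycles starting with SS; all miners refer all possible uncles. $U(\omega)$ is the number of uncles created during $\omega$ referred by nephews in $\omega$ or a later cycle. *)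

From HB Require Import structures.
From mathcomp Require Import all_boot all_order all_algebra.
From mathcomp Require Import all_classical all_reals all_analysis.
Set Implicit Arguments. Unset Strict Implicit. Unset Printing Implicit Defensive.
Import Order.TTheory GRing.Theory Num.Theory.

(* Words over {S, H}: true = S (attacker block), false = H (honest block). *)

(* Dyck words: S = up step, H = down step. *)
Fixpoint dyck_aux (k : nat) (w : seq bool) : bool :=
  match w with
  | [::] => k == 0
  | true :: w' => dyck_aux k.+1 w'
  | false :: w' => if k is k'.+1 then dyck_aux k' w' else false
  end.
Definition dyck (w : seq bool) : bool := dyck_aux 0 w.

Local Open Scope ring_scope.

Definition cycle_prob {R : realType} (p q : R) (om : seq bool) : R :=
  match om with
  | [:: false] => p
  | [:: true; false; true] => p * q ^+ 2
  | [:: true; false; false] => p ^+ 2 * q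
  | true :: true :: r =>
      let w := take (size r).-1 r in
      if (last true r == false) && dyck w
      then q ^+ 2 * p * (p * q) ^+ (size w)./2 else 0
  | _ => 0
  end.

(* Blocks are identified by their creation
   time (index of the letter of the cycle word that created them).
   Heights are relative to the last official block before the cycle (height 0).
   bparent = None means the parent is that last official block. *)
Record block := Block {
  bminer    : bool;        (* true = attacker *)
  btime     : nat;
  bheight   : nat;
  bparent   : option nat;
  bofficial : bool;        (* official at the end of the cycle *)
  bpub      : nat
}.

(* Strategy 2A in a cycle SSwH: the attacker mines secretly on his fork,
   honest miners mine on the (public) honest chain; at the end the attacker
   publishes his whole fork (time tend), which becomes official. *)
Fixpoint fork_blocks (om : seq bool) (t na nh : nat) (la lh : option nat)
    (tend : nat) : seq block :=
  match om with
  | [::] => [::]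
  | true :: r =>
      Block true t na.+1 la true tend :: fork_blocks r t.+1 na.+1 nh (Some t) lh tend
  | false :: r =>
      Block false t nh.+1 lh false t :: fork_blocks r t.+1 na nh.+1 la (Some t) tend
  end.

(* The boolean c
   only matters in the cycle SHH: c = true iff the second honest block is
   mined on top of the attacker's block (probability gamma). *)
Definition cycle_blocks (om : seq bool) (c : bool) : seq block :=
  match om with
  | [:: false] => [:: Block false 0 1 None true 0]
  | [:: true; false; true] =>
      [:: Block true 0 1 None true 1; Block false 1 1 None false 1;
          Block true 2 2 (Some 0) true 2]
  | [:: true; false; false] =>
      if c then
        [:: Block true 0 1 None true 1; Block false 1 1 None false 1;
            Block false 2 2 (Some 0) true 2]
      else
        [:: Block true 0 1 None false 1; Block false 1 1 None true 1;
            Block false 2 2 (Some 1) true 2]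
  | _ => fork_blocks om 0 0 0 None None (size om).-1
  end.

Definition parent_official (bs : seq block) (b : block) : bool :=
  match bparent b with
  | None => true
  | Some t => has (fun b' => (btime b' == t) && bofficial b') bs
  end.

Definition is_uncle (bs : seq block) (b : block) : bool :=
  ~~ bofficial b && parent_official bs b.

Definition top_height (bs : seq block) : nat :=
  \max_(b <- bs | bofficial b) bheight b.

Definition can_refer (n1 : nat) (nephew u : block) : bool :=
  [&& bofficial nephew, (bpub u < btime nephew)%N,
      (bheight u < bheight nephew)%N & (bheight nephew - bheight u <= n1)%N].

(* u is eventually referred: by a nephew of the cycle, or by a nephew of a
   later cycle; later cycles produce an official block at every height
   > top_height, all mined after the current cycle, so the first of them
   (height top_height+1) refers u iff its distance to u is at most n1. *)
Definition referred (n1 : nat) (bs : seq block) (u : block) : bool :=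
  has (fun b => can_refer n1 b u) bs || ((top_height bs).+1 - bheight u <= n1)%N.

Definition U (n1 : nat) (bs : seq block) : nat :=
  count (fun b => is_uncle bs b && referred n1 bs b) bs.

(* Contribution to E[U] of the outcomes (cycle word of length n, coin c). *)
Definition EU_len {R : realType} (p q gamma : R) (n1 n : nat) : R :=
  \sum_(t : n.-tuple bool) \sum_(c : bool)
     cycle_prob p q t * (if c then gamma else 1 - gamma) * (U n1 (cycle_blocks t c))%:R.

From HB Require Import structures.
From mathcomp Require Import all_boot all_order all_algebra.
From mathcomp Require Import all_classical all_reals all_analysis.
From mathcomp Require Import zify ring lra.
Import Order.TTheory GRing.Theory Num.Theory.
Import numFieldNormedType.Exports.

Set Implicit Arguments.
Unset Strict Implicit.
Unset Printing Implicit Defensive.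

(* Cycles H contribute no uncle and the cycles SHS, SHH (probability pq) one
   referred uncle each.  In a cycle SS w H the only uncle is the first honest
   block, mined when the attacker's lead is J = 2 + j, j the length of the
   initial run of S in wH; it is referred iff J <= n1, because the first
   official block above it has height J + 1.  The lead is a random walk drifting
   down (q < p), so it returns almost surely (its survival probability decays
   geometrically), and the run length j has law q^j p.  Hence
   E[U] = pq + q^2 (1 - q^(n1 - 1)) = q - q^(n1 + 1). *)

Definition block_tuple (b : block) :=
  (bminer b, btime b, bheight b, bparent b, bofficial b, bpub b).
Definition tuple_block (x : bool * nat * nat * option nat * bool * nat) :=
  let: (m, t, h, par, off, pub) := x in Block m t h par off pub.
Lemma block_tupleK : cancel block_tuple tuple_block. Proof. by case. Qed.
HB.instance Definition _ := Equality.copy block (can_type block_tupleK).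

Section ForkBlocks.
Variable tend : nat.
Implicit Types (s : seq bool) (t na nh th : nat) (la lh : option nat).

Lemma fork_blocks_inv s t na nh la lh b :
  b \in fork_blocks s t na nh la lh tend ->
  [/\ bofficial b = bminer b, t <= btime b & bminer b -> na < bheight b].
Proof.
elim: s t na nh la lh => [|[] s IH] t na nh la lh //=;
  rewrite inE => /predU1P[-> //|/IH[-> /ltnW t_le na_lt]].
  by split=> // /na_lt /ltnW.
by split.
Qed.

Lemma fork_blocks_first_attacker s t na nh la lh :
  has bminer (fork_blocks s t na nh la lh tend) ->
  has (fun b => bminer b && (bheight b == na.+1)) (fork_blocks s t na nh la lh tend).
Proof.
by elim: s t na nh la lh => [|[] s IH] t na nh la lh //=; rewrite ?eqxx // => /IH.
Qed.

Lemma fork_blocks_honest_parent s t na nh la th b :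
  th < t -> b \in fork_blocks s t na nh la (Some th) tend -> ~~ bminer b ->
  exists t', [/\ bparent b = Some t', t' = th \/ t <= t' &
    {in fork_blocks s t na nh la (Some th) tend, forall b', btime b' = t' -> ~~ bofficial b'}].
Proof.
elim: s t na nh la th => [|[] s IH] t na nh la th //= th_lt; rewrite inE.
- case/predU1P=> [-> //|b_in b_honest].
  have [t' [-> t'_old t'_nonofficial]] :=
    IH _ _ _ _ _ (leqW th_lt) b_in b_honest.
  exists t'; split=> //; first by case: t'_old => [|/ltnW]; [left|right].
  move=> b'; rewrite inE => /predU1P[-> /= t_eq|]; last exact: t'_nonofficial.
  by case: t'_old; lia.
- case/predU1P=> [-> _|b_in b_honest].
    exists th; split=> //; first by left.
    move=> b'; rewrite inE => /predU1P[-> //|/fork_blocks_inv[_ t_lt _] th_eq].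
    by move: th_lt t_lt; rewrite th_eq; lia.
  have [t' [-> t'_old t'_nonofficial]] := IH _ _ _ _ _ (ltnSn t) b_in b_honest.
  exists t'; split=> //; first by right; case: t'_old => [->|/ltnW].
  by move=> b'; rewrite inE => /predU1P[-> //|]; apply: t'_nonofficial.
Qed.

Lemma fork_blocks_attacker_run j s t na la :
  exists pre la', [/\ fork_blocks (nseq j true ++ false :: s) t na 0 la None tend =
       pre ++ Block false (t + j) 1 None false (t + j)
           :: fork_blocks s (t + j).+1 (na + j) 1 la' (Some (t + j)) tend,
    {in pre, forall b, [&& bofficial b, btime b < t + j & bheight b <= na + j]} &
    0 < j -> has (fun b => bheight b == na + j) pre].
Proof.
elim: j t na la => [|j IH] t na la /=; first by exists [::], la; rewrite !addn0.
have [pre [la' [-> pre_inv pre_top]]] := IH t.+1 na.+1 (Some t).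
exists (Block true t na.+1 la true tend :: pre), la'; rewrite -!addSnnS; split=> //.
  by move=> b; rewrite inE => /predU1P[-> /=|/pre_inv //]; lia.
by case: j {IH pre_inv} pre_top => [|j] pre_top _ /=; rewrite ?addn0 ?eqxx ?pre_top ?orbT.
Qed.

End ForkBlocks.

Section FirstUncle.
Variables (n1 J tend : nat) (pre : seq block) (la : option nat) (s : seq bool).
Hypotheses (J_gt0 : 0 < J)
  (pre_inv : {in pre, forall b, [&& bofficial b, btime b < J & bheight b <= J]})
  (pre_top : has (fun b => bheight b == J) pre).

Let first_honest := Block false J 1 None false J.
Let rest := fork_blocks s J.+1 J 1 la (Some J) tend.
Let bs := pre ++ first_honest :: rest.

Lemma not_uncle_rest b : b \in rest -> ~~ is_uncle bs b.
Proof.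
move=> b_in; have [official_miner _ _] := fork_blocks_inv b_in.
rewrite /is_uncle official_miner; case: (boolP (bminer b)) => //= b_honest.
have [t' [par_b t'_ge t'_nonofficial]] :=
  fork_blocks_honest_parent (ltnSn J) b_in b_honest.
rewrite /parent_official par_b has_cat /= negb_or negb_or andbF /=.
apply/andP; split; apply/hasPn => b'.
  move=> /pre_inv /and3P[_ b'_lt _]; apply/negP => /andP[/eqP b'_eq _].
  by case: t'_ge; lia.
move=> /t'_nonofficial b'_nonofficial.
by apply/negP => /andP[/eqP /b'_nonofficial /negP].
Qed.

Lemma referred_first_honest : referred n1 bs first_honest = (J <= n1).
Proof.
have top_ge : J <= top_height bs.
  case/hasP: pre_top => b b_in /eqP <-.
  apply: (leq_bigmax_seq b); first by rewrite mem_cat b_in.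
  by move: b_in => /pre_inv /and3P[].
rewrite /referred /= subSS subn0; apply/idP/idP.
  case/orP => [/hasP[b]|]; last exact: leq_trans.
  rewrite mem_cat inE => /orP[/pre_inv /and3P[_ b_lt _]|/orP[/eqP -> //|b_in]].
    by rewrite /can_refer /=; lia.
  have [official_miner _ na_lt] := fork_blocks_inv b_in.
  by rewrite /can_refer official_miner /= => /and4P[/na_lt]; lia.
move=> J_le; case: (boolP (has bminer rest)) => [/fork_blocks_first_attacker|no_miner].
  case/hasP=> b b_in /andP[b_miner /eqP b_height].
  have [official_miner t_le _] := fork_blocks_inv b_in.
  apply/orP; left; apply/hasP; exists b; first by rewrite mem_cat inE b_in !orbT.
  by rewrite /can_refer official_miner b_miner b_height /=; lia.
apply/orP; right; apply: leq_trans J_le; apply/bigmax_leqP_seq => b.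
rewrite mem_cat inE => /orP[/pre_inv /and3P[_ _ //]|/orP[/eqP -> //|b_in]].
have [-> _ _] := fork_blocks_inv b_in.
by move: no_miner => /hasPn /(_ b b_in) /negbTE ->.
Qed.

Lemma U_first_honest : U n1 bs = (J <= n1).
Proof.
rewrite /U count_cat /= (eq_in_count (a2 := pred0) (s := pre)); last first.
  by move=> b /pre_inv /and3P[official _ _]; rewrite /is_uncle official.
rewrite (eq_in_count (a2 := pred0) (s := rest)); last first.
  by move=> b /not_uncle_rest /negbTE ->.
by rewrite !count_pred0 referred_first_honest addn0.
Qed.

End FirstUncle.

Fixpoint first_passage (k : nat) (s : seq bool) : bool :=
  if s is b :: s' then (k != 0) && first_passage (if b then k.+1 else k.-1) s'
  else k == 0.

Lemma first_passage_rcons k w x : first_passage k.+1 (rcons w x) = ~~ x && dyck_aux k w.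
Proof.
elim: w k => [|[] w IH] k /=; first by case: x.
  exact: IH.
by case: k => [|k] //=; rewrite andbF; case: w {IH}.
Qed.

Lemma first_passage_has_false k s : first_passage k.+1 s -> false \in s.
Proof.
by elim: s k => [|[] s IH] k //=; rewrite inE => /IH ->.
Qed.

Lemma nseq_index_false s :
  false \in s -> s = nseq (index false s) true ++ false :: drop (index false s).+1 s.
Proof.
elim: s => [|[] s IH] //=; last by rewrite drop0.
by rewrite inE /= => /IH s_eq; rewrite {1}s_eq.
Qed.

Lemma U_cycle_SS n1 r c :
  false \in r -> U n1 (cycle_blocks [:: true, true & r] c) = ((index false r).+2 <= n1).
Proof.
move=> /nseq_index_false r_eq.
change (cycle_blocks _ c) with (fork_blocks (nseq 2 true ++ r) 0 0 0 None None (size r).+1).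
rewrite {1}r_eq catA -nseqD.
have [pre [la [-> pre_inv pre_top]]] :=
  @fork_blocks_attacker_run (size r).+1 (2 + index false r)
    (drop (index false r).+1 r) 0 0 None.
rewrite add0n add2n in pre_inv pre_top.
by rewrite U_first_honest ?pre_top.
Qed.

Lemma U_cycle_SHS n1 c : 2 <= n1 -> U n1 (cycle_blocks [:: true; false; true] c) = 1.
Proof. by case: n1 => [|[|n1]]. Qed.

Lemma U_cycle_SHH n1 c : 2 <= n1 -> U n1 (cycle_blocks [:: true; false; false] c) = 1.
Proof. by case: n1 => [|[|n1]] //; case: c. Qed.

Local Open Scope classical_set_scope.
Local Open Scope ring_scope.

Lemma sum_tuple0 (V : nmodType) (T : finType) (F : seq T -> V) :
  \sum_(t : 0.-tuple T) F t = F [::].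
Proof. by rewrite (big_pred1 [tuple]) // => t; rewrite [t]tuple0 /= eqxx. Qed.

Lemma sum_tupleS (V : nmodType) (T : finType) m (F : seq T -> V) :
  \sum_(t : m.+1.-tuple T) F t = \sum_(x : T) \sum_(t : m.-tuple T) F (x :: t).
Proof.
rewrite pair_big /= (reindex (fun xt : T * m.-tuple T => [tuple of xt.1 :: xt.2])) //=.
exists (fun t : m.+1.-tuple T => (thead t, [tuple of behead t])) => [[x t] _|t _] /=.
  by congr pair; apply: val_inj.
by rewrite [in RHS](tuple_eta t).
Qed.

Section WalkWeight.
Variables (R : realType) (p q : R).

Definition walk_weight (s : seq bool) : R := \prod_(b <- s) (if b then q else p).

Lemma walk_weight_dyck k w :
  dyck_aux k w -> walk_weight w * q ^+ k = (p * q) ^+ (size w + k)./2.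
Proof.
rewrite /walk_weight; elim: w k => [|[] w IH] k.
- by move=> /eqP ->; rewrite big_nil mul1r.
- by move=> /IH w_eq; rewrite big_cons [size _]/= addSnnS -w_eq exprS; ring.
case: k => [|k] // /IH w_eq.
rewrite big_cons [size _]/= addSn addnS [_.+2./2]/= [in RHS]exprS -w_eq exprS.
by ring.
Qed.

Lemma cycle_prob_SS r :
  cycle_prob p q [:: true, true & r] = q ^+ 2 * ((first_passage 1 r)%:R * walk_weight r).
Proof.
case/lastP: r => [|w x]; first by rewrite /cycle_prob /= !mul0r mulr0.
rewrite /cycle_prob size_rcons -cats1 take_size_cat // last_cat cats1 first_passage_rcons.
case: x => /=; first by rewrite mul0r mulr0.
rewrite /dyck; case: (boolP (dyck_aux 0 w)) => [w_dyck|]; last by rewrite mul0r mulr0.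
rewrite /walk_weight big_rcons /= -/(walk_weight w) mul1r.
by have := walk_weight_dyck w_dyck; rewrite addn0 expr0 mulr1 => <-; ring.
Qed.

End WalkWeight.

Section FirstPassage.
Variables (R : realType) (p q : R).
Local Notation walk_weight := (walk_weight p q).

Definition passage_weight k s : R := (first_passage k s)%:R * walk_weight s.

(* [index false s] is the length of the initial run of up steps of [s]. *)
Definition capped_passage_weight L k s : R :=
  passage_weight k s * (index false s <= L)%N%:R.

Definition first_passage_prob k m : R :=
  \sum_(t : m.-tuple bool) passage_weight k t.

Definition capped_first_passage_prob L k m : R :=
  \sum_(t : m.-tuple bool) capped_passage_weight L k t.

Lemma passage_weight_cons k b s :
  passage_weight k (b :: s) =
  (k != 0)%:R * ((if b then q else p) * passage_weight (if b then k.+1 else k.-1) s).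
Proof. by rewrite /passage_weight /= /walk_weight big_cons -mulnb natrM; ring. Qed.

Lemma first_passage_prob0 k : first_passage_prob k 0 = (k == 0)%:R.
Proof.
by rewrite /first_passage_prob sum_tuple0 /passage_weight /walk_weight big_nil mulr1.
Qed.

Lemma first_passage_prob_0S m : first_passage_prob 0 m.+1 = 0.
Proof.
rewrite /first_passage_prob sum_tupleS big1 // => b _.
by rewrite big1 // => t _; rewrite passage_weight_cons mul0r.
Qed.

Lemma first_passage_probSS k m :
  first_passage_prob k.+1 m.+1 = q * first_passage_prob k.+2 m + p * first_passage_prob k m.
Proof.
rewrite /first_passage_prob sum_tupleS big_bool !mulr_sumr.
by congr (_ + _); apply: eq_bigr => t _; rewrite passage_weight_cons mul1r.
Qed.

Lemma capped_first_passage_prob_S0 L k : capped_first_passage_prob L k.+1 0 = 0.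
Proof.
by rewrite /capped_first_passage_prob sum_tuple0 /capped_passage_weight /passage_weight !mul0r.
Qed.

Lemma capped_first_passage_prob0S k m :
  capped_first_passage_prob 0 k.+1 m.+1 = p * first_passage_prob k m.
Proof.
rewrite /capped_first_passage_prob sum_tupleS big_bool /= big1 => [|t _]; last first.
  by rewrite /capped_passage_weight mulr0.
rewrite add0r mulr_sumr; apply: eq_bigr => t _.
by rewrite /capped_passage_weight passage_weight_cons mul1r mulr1.
Qed.

Lemma capped_first_passage_probSS L k m :
  capped_first_passage_prob L.+1 k.+1 m.+1 =
  q * capped_first_passage_prob L k.+2 m + p * first_passage_prob k m.
Proof.
rewrite /capped_first_passage_prob sum_tupleS big_bool !mulr_sumr; congr (_ + _).
  apply: eq_bigr => t _.
  by rewrite /capped_passage_weight passage_weight_cons mul1r /= ltnS mulrA.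
by apply: eq_bigr => t _; rewrite /capped_passage_weight passage_weight_cons mul1r mulr1.
Qed.

End FirstPassage.

Section PassageLimits.
Variables (R : realType) (p q : R).
Hypotheses (pq1 : p + q = 1) (q_gt0 : 0 < q) (q_lt_p : q < p).
Local Notation first_passage_prob := (first_passage_prob p q).

Definition survival N k : R := 1 - \sum_(n < N) first_passage_prob k n.

Lemma survival0 k : survival 0 k = 1.
Proof. by rewrite /survival big_ord0 subr0. Qed.

Lemma survival_S0 N : survival N.+1 0 = 0.
Proof.
rewrite /survival big_ord_recl first_passage_prob0 big1 ?addr0 ?subrr // => n _.
exact: first_passage_prob_0S.
Qed.

Lemma survivalSS N k : survival N.+1 k.+1 = q * survival N k.+2 + p * survival N k.
Proof.
rewrite /survival big_ord_recl first_passage_prob0 add0r.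
under eq_bigr do rewrite first_passage_probSS.
rewrite big_split /= -!mulr_sumr -[in LHS]pq1; ring.
Qed.

Let p_gt0 : 0 < p. Proof. exact: lt_trans q_lt_p. Qed.

(* Survival from height k is controlled by the potential [lam ^+ k]: one step
   of the walk multiplies its mean by [q lam + p / lam = rate < 1]. *)
Let lam := (2 * q)^-1.
Let rate := 2^-1 + 2 * p * q.

Let lam_ge1 : 1 <= lam.
Proof. by rewrite invf_ge1 ?mulr_gt0 // mulr_natl mulr2n -pq1 lerD2r ltW. Qed.

Let rate_ge0 : 0 <= rate.
Proof. by rewrite addr_ge0 ?invr_ge0 ?mulr_ge0 ?ltW. Qed.

Let rate_lt1 : rate < 1.
Proof.
have pq_sq : (p + q) ^+ 2 = 1 by rewrite pq1 expr1n.
have : 0 < (p - q) ^+ 2 by rewrite exprn_gt0 // subr_gt0.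
rewrite /rate; nra.
Qed.

Let lam_step : lam * rate = q * lam ^+ 2 + p.
Proof. by rewrite /lam /rate; field; exact: lt0r_neq0. Qed.

Lemma survival_bound N k : 0 <= survival N k <= lam ^+ k * rate ^+ N.
Proof.
elim: N k => [|N IH] [|k]; rewrite ?survival0 ?survival_S0 ?expr0 ?mulr1 ?mul1r ?lexx ?ler01.
- by [].
- by rewrite exprn_ege1.
- by rewrite exprn_ge0.
have /andP[low2 up2] := IH k.+2; have /andP[low0 up0] := IH k.
rewrite survivalSS addr_ge0 ?mulr_ge0 ?(ltW q_gt0) ?(ltW p_gt0) //=.
have -> : lam ^+ k.+1 * rate ^+ N.+1 =
    q * (lam ^+ k.+2 * rate ^+ N) + p * (lam ^+ k * rate ^+ N).
  transitivity (lam ^+ k * rate ^+ N * (lam * rate)); first by rewrite !exprS; ring.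
  by rewrite lam_step !exprS; ring.
by rewrite lerD // ler_pM2l.
Qed.

Lemma survival_cvg0 k : survival^~ k @ \oo --> 0.
Proof.
apply: (squeeze_cvgr (f := cst 0) (h := fun N => lam ^+ k * rate ^+ N)).
- by near=> N; exact: survival_bound.
- exact: cvg_cst.
- rewrite -(mulr0 (lam ^+ k)); apply: cvgMl_tmp; apply: cvg_expr.
  by rewrite ger0_norm.
Unshelve. all: by end_near.
Qed.

Lemma first_passage_series k :
  (fun N => \sum_(n < N) first_passage_prob k n) @ \oo --> (1 : R).
Proof.
rewrite (_ : (fun N => _) = (fun N => 1 - survival N k)); last first.
  by apply/funext => N; rewrite /survival opprB addrC subrK.
by rewrite -[X in _ --> X](subr0 1); apply: cvgB; [exact: cvg_cst|exact: survival_cvg0].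
Qed.

Lemma capped_partial_sum0S k N :
  \sum_(n < N.+1) capped_first_passage_prob p q 0 k.+1 n =
  p * \sum_(n < N) first_passage_prob k n.
Proof.
rewrite big_ord_recl capped_first_passage_prob_S0 add0r mulr_sumr.
by apply: eq_bigr => n _; rewrite capped_first_passage_prob0S.
Qed.

Lemma capped_partial_sumSS L k N :
  \sum_(n < N.+1) capped_first_passage_prob p q L.+1 k.+1 n =
  q * \sum_(n < N) capped_first_passage_prob p q L k.+2 n
  + p * \sum_(n < N) first_passage_prob k n.
Proof.
rewrite big_ord_recl capped_first_passage_prob_S0 add0r !mulr_sumr -big_split.
by apply: eq_bigr => n _; rewrite capped_first_passage_probSS.
Qed.

Lemma capped_first_passage_series L k :
  (fun N => \sum_(n < N) capped_first_passage_prob p q L k.+1 n) @ \oo --> 1 - q ^+ L.+1.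
Proof.
have p_eq : p = 1 - q by rewrite -pq1 addrK.
elim: L k => [|L IH] k; rewrite -cvg_shiftS.
  rewrite (eq_cvg _ _ (capped_partial_sum0S k)) expr1 -p_eq -[p in X in _ --> X]mulr1.
  by apply: cvgMl_tmp; apply: first_passage_series.
rewrite (eq_cvg _ _ (capped_partial_sumSS L k)).
have -> : 1 - q ^+ L.+2 = q * (1 - q ^+ L.+1) + p * 1 by rewrite p_eq exprS; ring.
by apply: cvgD; apply: cvgMl_tmp; [apply: IH|apply: first_passage_series].
Qed.

End PassageLimits.

Section CycleExpectation.
Variables (R : realType) (p q gamma : R) (n1 : nat).
Hypothesis n1_ge2 : (2 <= n1)%N.

Definition expected_U_word (t : seq bool) : R :=
  \sum_(c : bool) cycle_prob p q t * (if c then gamma else 1 - gamma)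
                  * (U n1 (cycle_blocks t c))%:R.

Lemma expected_U_word_prob0 t : cycle_prob p q t = 0 -> expected_U_word t = 0.
Proof. by move=> prob0; rewrite /expected_U_word big1 // => c _; rewrite prob0 !mul0r. Qed.

Lemma expected_U_word_coin_free t u :
  (forall c, U n1 (cycle_blocks t c) = u) -> expected_U_word t = cycle_prob p q t * u%:R.
Proof. by move=> U_eq; rewrite /expected_U_word big_bool /= !U_eq; ring. Qed.

Lemma expected_U_word_H t : expected_U_word (false :: t) = 0.
Proof.
case: t => [|x t]; last exact: expected_U_word_prob0.
by rewrite (@expected_U_word_coin_free _ 0) ?mulr0.
Qed.

Lemma expected_U_word_SS r :
  expected_U_word [:: true, true & r] = q ^+ 2 * capped_passage_weight p q (n1 - 2) 1 r.
Proof.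
rewrite /capped_passage_weight /passage_weight.
have [r_fp|r_nfp] := boolP (first_passage 1 r); last first.
  rewrite expected_U_word_prob0 ?mulr0n ?mul0r ?mulr0 //.
  by rewrite cycle_prob_SS (negbTE r_nfp) mul0r mulr0.
rewrite (@expected_U_word_coin_free _ ((index false r).+2 <= n1)%N) => [|c]; last first.
  exact/U_cycle_SS/(first_passage_has_false r_fp).
by rewrite cycle_prob_SS r_fp leq_subRL // add2n mul1r mulrA.
Qed.

Lemma sum_expected_U_SH m :
  \sum_(t : m.-tuple bool) expected_U_word [:: true, false & t] =
  (m == 1)%N%:R * (p * q ^+ 2 + p ^+ 2 * q).
Proof.
case: m => [|[|m]].
- rewrite (sum_tuple0 (fun t => expected_U_word [:: true, false & t])).
  by rewrite expected_U_word_prob0 ?mul0r.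
- rewrite (sum_tupleS _ (fun t => expected_U_word [:: true, false & t])) big_bool /=.
  rewrite !(sum_tuple0 (fun t => expected_U_word [:: true, false, _ & t])) mul1r.
  rewrite !(@expected_U_word_coin_free _ 1) => [|c|c].
  - by rewrite !mulr1.
  - exact: U_cycle_SHH.
  - exact: U_cycle_SHS.
- rewrite big1 ?mul0r // => t _; apply: expected_U_word_prob0.
  by case: t => -[|x [|y s]] //; case: x.
Qed.

Lemma EU_lenSS m :
  EU_len p q gamma n1 m.+2 =
  q ^+ 2 * capped_first_passage_prob p q (n1 - 2) 1 m
  + (m == 1)%N%:R * (p * q ^+ 2 + p ^+ 2 * q).
Proof.
rewrite /EU_len -/(expected_U_word _) (sum_tupleS _ expected_U_word) big_bool /=.
rewrite [X in _ + X]big1 ?addr0 => [|t _]; last exact: expected_U_word_H.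
rewrite (sum_tupleS _ (fun t => expected_U_word (true :: t))) big_bool /= -sum_expected_U_SH.
congr (_ + _); rewrite mulr_sumr; apply: eq_bigr => t _; exact: expected_U_word_SS.
Qed.

Lemma EU_len0 : EU_len p q gamma n1 0 = 0.
Proof.
by rewrite /EU_len -/(expected_U_word _) (sum_tuple0 expected_U_word) expected_U_word_prob0.
Qed.

Lemma EU_len1 : EU_len p q gamma n1 1 = 0.
Proof.
rewrite /EU_len -/(expected_U_word _) (sum_tupleS _ expected_U_word) big_bool /=.
rewrite !(sum_tuple0 (fun t => expected_U_word (_ :: t))) expected_U_word_H.
by rewrite expected_U_word_prob0 ?addr0.
Qed.

Lemma EU_partial_sum N :
  \sum_(n < N.+2) EU_len p q gamma n1 n =
  q ^+ 2 * \sum_(m < N) capped_first_passage_prob p q (n1 - 2) 1 m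
  + (p * q ^+ 2 + p ^+ 2 * q) * \sum_(m < N) ((m : nat) == 1)%:R.
Proof.
rewrite 2!big_ord_recl EU_len0 EU_len1 !add0r /=.
under eq_bigr do rewrite EU_lenSS.
by rewrite big_split /= !mulr_sumr; congr (_ + _); apply: eq_bigr => m _; rewrite mulrC.
Qed.

End CycleExpectation.

Lemma indicator1_series (R : realType) :
  (fun N => \sum_(m < N) (((m : nat) == 1)%:R : R)) @ \oo --> (1 : R).
Proof.
have sum_eq N : \sum_(m < N.+2) (((m : nat) == 1)%:R : R) = 1.
  by rewrite 2!big_ord_recl big1 /= ?add0r ?addr0.
by rewrite -2!cvg_shiftS (eq_cvg _ _ sum_eq); apply: cvg_cst.
Qed.

Theorem proposition12 (R : realType) (p q gamma : R) (n1 : nat) :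
  p + q = 1 -> 0 < q -> q < p -> 0 <= gamma <= 1 -> (2 <= n1)%N ->
  (fun N : nat => \sum_(n < N) EU_len p q gamma n1 n) @ \oo --> q - q ^+ n1.+1.
Proof.
(* Only the cycle SHH depends on the coin, and both outcomes refer one uncle. *)
move=> pq1 q_gt0 q_lt_p _ n1_ge2.
rewrite -2!cvg_shiftS (eq_cvg _ _ (EU_partial_sum p q gamma n1_ge2)).
have -> : q - q ^+ n1.+1 =
    q ^+ 2 * (1 - q ^+ (n1 - 2).+1) + (p * q ^+ 2 + p ^+ 2 * q) * 1.
  have -> : n1.+1 = (2 + (n1 - 2).+1)%N by rewrite addnS subnKC.
  have p_eq : p = 1 - q by rewrite -pq1 addrK.
  by rewrite exprD p_eq; ring.
apply: cvgD; apply: cvgMl_tmp; last exact: indicator1_series.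
exact: capped_first_passage_series.
Qed.
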